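(* Let $M,N$ be positive integers and $P_s>0$. Let $\{x[k,l] : 0\le k\le N-1,\ 0\le l\le M-1\}$ be independent and identically distributed QPSK symbols of power $P_s$, i.e. each $x[k,l]$ is uniformly distributed on $\{\sqrt{P_s/2}\,(\pm 1 \pm \mathrm{i})\}$ (so $|x[k,l]|^2=P_s$). Define the matrix $\widetilde{\mathbf{X}}\in\mathbb{C}^{MN\times MN}$ as follows: for row index $p=k'+Nl'$ and column index $q=k''+Nl''$ with $0\le k',k''\le N-1$ and $0\le l',l''\le M-1$, $$ \widetilde{\mathbf{X}}[p,q]=\begin{cases} x\big[[k'-k'']_N,[l'-l'']_M\big]\, e^{-\mathrm{i}2\pi\frac{k'}{N}}\, e^{\mathrm{i}2\pi\frac{(k'')_N\,[l'-l'']_M}{MN}} & \text{if } l'<l'',\\[4pt] x\big[[k'-k'']_N,[l'-l'']_M\big]\, e^{\mathrm{i}2\pi\frac{(k'')_N\,[l'-l'']_M}{MN}} & \text{otherwise,} \end{cases} $$ and let $\mathbf{G}=\widetilde{\mathbf{X}}^{\mathrm H}\widetilde{\mathbf{X}}\in\mathbb{C}^{MN\times MN}$. Then for every off-diagonal entry, i.e. every $0\le p\ne q\le MN-1$, $$ \mathbb{E}\big[\mathbf{G}[p,q]\big]=0,\qquad \operatorname{var}\big[\mathbf{G}[p,q]\big]=MNP_s^2 . $$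
   Context: $\mathrm{i}$ denotes the imaginary unit and $\widetilde{\mathbf{X}}^{\mathrm H}$ the conjugate transpose. $[a]_N$ and $[a]_M$ denote the residues of the integer $a$ modulo $N$ and modulo $M$ (in $\{0,\dots,N-1\}$ and $\{0,\dots,M-1\}$ respectively). For an integer $0\le k\le N-1$, $(k)_N=k$ if $k\le N/2$ and $(k)_N=k-N$ otherwise. (In the paper, $\widetilde{\mathbf{X}}$ arises from writing the OTFS delay–Doppler input–output relation $\mathbf{y}=\widetilde{\mathbf{X}}\mathbf{h}+\mathbf{w}$, and $\mathbf{G}$ is the gain matrix of the matched filter estimate $\widetilde{\mathbf{X}}^{\mathrm H}\mathbf{y}$.) *)

From HB Require Import structures.
From mathcomp Require Import all_boot all_order all_algebra.
From mathcomp Require Import all_classical all_reals all_analysis.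
From mathcomp Require Import complex.
Set Implicit Arguments. Unset Strict Implicit. Unset Printing Implicit Defensive.
Import Order.TTheory GRing.Theory Num.Theory.
Local Open Scope ring_scope.
Local Open Scope complex_scope.

Section OTFS.
Variable R : realType.

Definition expi (t : R) : R[i] := cos t +i* sin t.

Lemma submod_proof (N : nat) (a b : 'I_N) : ((a + N - b) %% N < N)%N.
Proof. by rewrite ltn_pmod // (leq_ltn_trans (leq0n a) (ltn_ord a)). Qed.
Definition submod (N : nat) (a b : 'I_N) : 'I_N := Ordinal (submod_proof a b).

Definition centred (N k : nat) : int :=
  if (2 * k <= N)%N then k%:Z else k%:Z - N%:Z.

(* QPSK symbol of power Ps: sqrt(Ps/2) (+-1 +- i); the pair of booleans
   selects the signs of the real and imaginary parts. *)
Definition sgnb (b : bool) : R := if b then 1 else -1.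
Definition qpsk (Ps : R) (s : bool * bool) : R[i] :=
  (Num.sqrt (Ps / 2))%:C * (sgnb s.1 +i* sgnb s.2).

Definition grid (N M : nat) := {ffun 'I_N * 'I_M -> bool * bool}.

Lemma kof_proof (N M : nat) (p : 'I_(N * M)) : (p %% N < N)%N.
Proof.
case: N p => [|N] p; last by rewrite ltn_pmod.
by case: p => /= m; rewrite mul0n.
Qed.
Lemma lof_proof (N M : nat) (p : 'I_(N * M)) : (p %/ N < M)%N.
Proof.
case: N p => [|N] p; first by case: p => /= m; rewrite mul0n.
case: p => /= m hm; by rewrite ltn_divLR // mulnC.
Qed.
Definition kof (N M : nat) (p : 'I_(N * M)) : 'I_N := Ordinal (kof_proof p).
Definition lof (N M : nat) (p : 'I_(N * M)) : 'I_M := Ordinal (lof_proof p).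

Definition Xt (N M : nat) (Ps : R) (x : grid N M) : 'M[R[i]]_(N * M) :=
  \matrix_(p, q)
    let k1 := kof p in let l1 := lof p in
    let k2 := kof q in let l2 := lof q in
    let dl := submod l1 l2 in
    let base := qpsk Ps (x (submod k1 k2, dl)) *
      expi (2 * pi * ((centred N k2)%:~R * (dl : nat)%:R) / (M * N)%:R) in
    if (l1 < l2)%N then base * expi (- (2 * pi * (k1 : nat)%:R / N%:R))
    else base.

Definition ctrmx (m n : nat) (A : 'M[R[i]]_(m, n)) : 'M[R[i]]_(n, m) :=
  map_mx conjc A^T.

Definition Gmx (N M : nat) (Ps : R) (x : grid N M) : 'M[R[i]]_(N * M) :=
  ctrmx (Xt Ps x) *m Xt Ps x.

(* Expectation over i.i.d. uniform QPSK symbols: the joint law of the grid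
   is uniform on all 4^(NM) realisations. *)
Definition Exp (N M : nat) (f : grid N M -> R[i]) : R[i] :=
  (#|{: grid N M}|%:R)^-1 * \sum_(x : grid N M) f x.

Definition Var (N M : nat) (f : grid N M -> R[i]) : R[i] :=
  Exp (fun x => (f x - Exp f) * conjc (f x - Exp f)).

End OTFS.

From HB Require Import structures.
From mathcomp Require Import all_boot all_order all_algebra.
From mathcomp Require Import all_classical all_reals all_analysis.
From mathcomp Require Import complex.
From mathcomp Require Import ring lra zify.
Set Implicit Arguments. Unset Strict Implicit. Unset Printing Implicit Defensive.
Import Order.TTheory GRing.Theory Num.Theory.

(* Write X~[r,p] = x[s(r,p)] * phase(r,p) with s(r,p) = ([k_r - k_p]_N, [l_r - l_p]_M)
   and |phase| = 1.  Then G[p,q] = sum_r w_r conj(x[s(r,p)]) x[s(r,q)] with |w_r| = 1.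
   Since s(r,.) and s(.,p) are injective, for p <> q the two symbols in each term
   sit at different sites, and for r <> r' the terms r and r' involve different
   sites.  The QPSK law is invariant under multiplying one symbol by -1 or by i;
   this kills the mean of each term and every cross term of E|G[p,q]|^2, while
   each of the NM diagonal terms contributes |x|^4 = Ps^2. *)

Lemma submod_inj_r N (a : 'I_N) : injective (submod a).
Proof.
move=> b c /(congr1 val) /= eq_bc; apply/val_inj => /=.
have ha := ltn_ord a; have hb := ltn_ord b; have hc := ltn_ord c.
have : (a + N - b) + b = (a + N - c) + c %[mod N].
  by rewrite !subnK //; lia.
rewrite -modnDml eq_bc modnDml => /eqP.
by rewrite eqn_modDl !modn_small // => /eqP.
Qed.

Lemma submod_inj_l N (c : 'I_N) : injective (fun a : 'I_N => submod a c).
Proof.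
move=> a b /(congr1 val) /= eq_ab; apply/val_inj => /=.
have ha := ltn_ord a; have hb := ltn_ord b; have hc := ltn_ord c.
have addNc x : x + N - c = x + (N - c) by lia.
move: eq_ab; rewrite !addNc => /eqP.
by rewrite eqn_modDr !modn_small // => /eqP.
Qed.

Lemma kof_lof_inj N M (p q : 'I_(N * M)) : kof p = kof q -> lof p = lof q -> p = q.
Proof.
move=> /(congr1 val) /= eq_k /(congr1 val) /= eq_l; apply/val_inj => /=.
by rewrite (divn_eq p N) (divn_eq q N) eq_k eq_l.
Qed.

Local Open Scope ring_scope.
Local Open Scope complex_scope.

Section Unimodular.
Variable R : rcfType.
Implicit Types u v : R[i].

Definition unimodular u := u * conjc u = 1.

Lemma unimodular1 : unimodular 1.
Proof. by rewrite /unimodular rmorph1 mulr1. Qed.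

Lemma unimodularM u v : unimodular u -> unimodular v -> unimodular (u * v).
Proof. by move=> hu hv; rewrite /unimodular rmorphM mulrACA hu hv mulr1. Qed.

Lemma conjc_mulJl u v : conjc (conjc u * v) = u * conjc v.
Proof. by rewrite rmorphM /= conjcK. Qed.

Lemma unimodularJ u : unimodular u -> unimodular (conjc u).
Proof. by rewrite /unimodular conjcK mulrC. Qed.

End Unimodular.

Lemma expi_unimodular (R : realType) (t : R) : unimodular (expi t).
Proof.
rewrite /unimodular /expi; simpc; apply/eqP; rewrite eq_complex /=.
by rewrite -!expr2 cos2Dsin2 mulrC addNr !eqxx.
Qed.

Section QPSK.
Variables (R : realType) (Ps : R).

Definition sgn_neg (s : bool * bool) := (~~ s.1, ~~ s.2).
Definition sgn_rot (s : bool * bool) := (~~ s.2, s.1).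

Lemma sgn_neg_inj : injective sgn_neg. Proof. by move=> [[] []] [[] []]. Qed.
Lemma sgn_rot_inj : injective sgn_rot. Proof. by move=> [[] []] [[] []]. Qed.

Lemma qpsk_neg s : qpsk Ps (sgn_neg s) = - qpsk Ps s.
Proof. by case: s => [[] []]; rewrite /qpsk /sgnb /=; simpc. Qed.

Lemma qpsk_rot s : qpsk Ps (sgn_rot s) = 'i * qpsk Ps s.
Proof. by case: s => [[] []]; rewrite /qpsk /sgnb /=; simpc. Qed.

Lemma qpsk_mulJ s : 0 <= Ps -> qpsk Ps s * conjc (qpsk Ps s) = Ps%:C.
Proof.
move=> Ps_ge0; have h : Num.sqrt (Ps / 2) ^+ 2 = Ps / 2.
  by rewrite sqr_sqrtr // divr_ge0.
case: s => [[] []]; rewrite /qpsk /sgnb /=; simpc; apply/eqP;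
  rewrite eq_complex /= -?expr2 h; apply/andP; split; apply/eqP; lra.
Qed.

End QPSK.

Section Expectation.
Variables (R : realType) (N M : nat).
Implicit Types f g : grid N M -> R[i].

Lemma eq_Exp f g : f =1 g -> Exp f = Exp g.
Proof. by move=> /funext ->. Qed.

Lemma ExpZ c f : Exp (fun x => c * f x) = c * Exp f.
Proof. by rewrite /Exp -mulr_sumr mulrCA. Qed.

Lemma Exp_sum (I : Type) (r : seq I) (P : pred I) (F : I -> grid N M -> R[i]) :
  Exp (fun x => \sum_(i <- r | P i) F i x) = \sum_(i <- r | P i) Exp (F i).
Proof. by rewrite /Exp exchange_big mulr_sumr. Qed.

Lemma Exp_cst (c : R[i]) : Exp (fun _ : grid N M => c) = c.
Proof.
have grid_neq0 : (#|{: grid N M}|%:R : R[i]) != 0.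
  by rewrite pnatr_eq0 -lt0n; apply/card_gt0P; exists [ffun => (true, true)].
rewrite /Exp sumr_const (_ : #|xpredT| = #|{: grid N M}|) //.
by rewrite -[c *+ _]mulr_natr mulrCA mulVf ?mulr1.
Qed.

Lemma Exp_eq0_odd f (phi : grid N M -> grid N M) :
  injective phi -> (forall x, f (phi x) = - f x) -> Exp f = 0.
Proof.
move=> phi_inj f_odd; rewrite /Exp.
have : \sum_x f x = - \sum_x f x.
  by rewrite {1}(reindex_inj phi_inj) -sumrN; apply: eq_bigr => x _.
move/eqP; rewrite -subr_eq0 opprK -mulr2n mulrn_eq0 /= => /eqP ->.
by rewrite mulr0.
Qed.

Definition update_site (c : 'I_N * 'I_M) (t : bool * bool -> bool * bool)
  (x : grid N M) : grid N M :=
  [ffun d => if d == c then t (x d) else x d].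

Lemma update_siteE c t x d : update_site c t x d = if d == c then t (x d) else x d.
Proof. by rewrite ffunE. Qed.

Lemma update_site_inj c t : injective t -> injective (update_site c t).
Proof.
move=> t_inj x y eq_xy; apply/ffunP => d.
move: (congr1 (fun z : grid N M => z d) eq_xy).
by rewrite !update_siteE; case: (d == c) => // /t_inj.
Qed.

End Expectation.

Section QPSKMoments.
Variables (R : realType) (N M : nat) (Ps : R).
Local Notation Q := (qpsk Ps).
Implicit Types a b : 'I_N * 'I_M.

Lemma Exp_qpsk_pair a b : a != b ->
  Exp (fun x : grid N M => conjc (Q (x a)) * Q (x b)) = 0.
Proof.
move=> neq_ab; apply: (Exp_eq0_odd (update_site_inj (c := b) sgn_neg_inj)) => x.
by rewrite !update_siteE eqxx (negbTE neq_ab) qpsk_neg mulrN.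
Qed.

Lemma Exp_qpsk_quad a b a' b' : a != b -> a' != b' -> a != a' -> b != b' ->
  Exp (fun x : grid N M =>
    conjc (Q (x a)) * Q (x b) * (Q (x a') * conjc (Q (x b')))) = 0.
Proof.
move=> neq_ab neq_a'b' neq_aa' neq_bb'; rewrite eq_sym in neq_bb'.
have [eq_a'b | neq_a'b] := eqVneq a' b.
  (* x b occurs twice, so negating it does nothing; rotating it by i gives i^2 = -1. *)
  subst a'; apply: (Exp_eq0_odd (update_site_inj (c := b) sgn_rot_inj)) => x.
  rewrite !update_siteE eqxx (negbTE neq_ab) (negbTE neq_bb') !qpsk_rot.
  set A := Q (x a); set B := Q (x b); set C := Q (x b').
  transitivity ('i ^+ 2 * (conjc A * B * (B * conjc C))); first by ring.
  by rewrite sqr_i mulN1r.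
apply: (Exp_eq0_odd (update_site_inj (c := b) sgn_neg_inj)) => x.
rewrite !update_siteE eqxx (negbTE neq_ab) (negbTE neq_a'b) (negbTE neq_bb').
by rewrite qpsk_neg mulrN !mulNr.
Qed.

End QPSKMoments.

Section Gram.
Variables (R : realType) (N M : nat) (Ps : R).
Local Notation Q := (qpsk Ps).
Implicit Types (x : grid N M) (p q r : 'I_(N * M)).

Definition site r p : 'I_N * 'I_M :=
  (submod (kof r) (kof p), submod (lof r) (lof p)).

Definition phase r p : R[i] :=
  expi (2 * pi * ((centred N (kof p))%:~R * (submod (lof r) (lof p) : nat)%:R)
        / (M * N)%:R) *
  (if (lof r < lof p)%N then expi (- (2 * pi * (kof r : nat)%:R / N%:R)) else 1).

Lemma XtE x r p : Xt Ps x r p = Q (x (site r p)) * phase r p.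
Proof. by rewrite mxE /phase; case: ifP; rewrite ?mulr1 mulrA. Qed.

Lemma phase_unimodular r p : unimodular (phase r p).
Proof.
apply: unimodularM; first exact: expi_unimodular.
by case: ifP => _; [exact: expi_unimodular | exact: unimodular1].
Qed.

Lemma site_neq r p q : p != q -> site r p != site r q.
Proof.
apply: contra => /eqP eq_site; apply/eqP/kof_lof_inj.
- exact: submod_inj_r (congr1 fst eq_site).
- exact: submod_inj_r (congr1 snd eq_site).
Qed.

Lemma site_inj p : injective (site^~ p).
Proof.
move=> r r' eq_site; apply: kof_lof_inj.
- exact: submod_inj_l (congr1 fst eq_site).
- exact: submod_inj_l (congr1 snd eq_site).
Qed.

Definition gram_weight p q r := conjc (phase r p) * phase r q.

Definition gram_term p q x r := conjc (Q (x (site r p))) * Q (x (site r q)).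

Lemma gram_weight_unimodular p q r : unimodular (gram_weight p q r).
Proof. exact/unimodularM/phase_unimodular/unimodularJ/phase_unimodular. Qed.

Lemma GmxE x p q : Gmx Ps x p q = \sum_r gram_weight p q r * gram_term p q x r.
Proof.
rewrite /Gmx /ctrmx; move: (Xt Ps x) (XtE x) => X XE.
rewrite mxE; apply: eq_bigr => r _.
by rewrite !mxE !XE rmorphM /gram_weight /gram_term; ring.
Qed.

End Gram.

Section OffDiagonal.
Variables (R : realType) (N M : nat) (Ps : R) (p q : 'I_(N * M)).
Hypothesis neq_pq : p != q.
Local Notation G x := (Gmx Ps x p q).
Local Notation T x r := (gram_term Ps p q x r).
Local Notation w := (gram_weight R p q).

Lemma Exp_gram_term r : Exp (fun x : grid N M => T x r) = 0.
Proof. exact/Exp_qpsk_pair/site_neq. Qed.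

Lemma Exp_gram_term_mulJ r r' : 0 <= Ps ->
  Exp (fun x : grid N M => T x r * conjc (T x r')) =
  if r == r' then (Ps ^+ 2)%:C else 0.
Proof.
move=> Ps_ge0; case: eqVneq => [<- | neq_rr'].
  rewrite -[RHS](@Exp_cst _ N M); apply: eq_Exp => x.
  rewrite /gram_term conjc_mulJl.
  set A := qpsk Ps _; set B := qpsk Ps _.
  transitivity ((A * conjc A) * (B * conjc B)); first by ring.
  by rewrite !qpsk_mulJ // -rmorphM expr2.
under eq_Exp do rewrite /gram_term conjc_mulJl.
apply: Exp_qpsk_quad; rewrite ?site_neq //.
all: by apply: contra_neq neq_rr'; apply: site_inj.
Qed.

Lemma Exp_Gmx : Exp (fun x : grid N M => G x) = 0.
Proof.
rewrite (eq_Exp (fun x => GmxE Ps x p q)) Exp_sum big1 // => r _.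
by rewrite ExpZ Exp_gram_term mulr0.
Qed.

Lemma Exp_Gmx_mulJ : 0 <= Ps ->
  Exp (fun x : grid N M => G x * conjc (G x)) = (N * M)%:R * (Ps ^+ 2)%:C.
Proof.
move=> Ps_ge0.
have expand x : G x * conjc (G x) =
    \sum_r \sum_r' (w r * conjc (w r')) * (T x r * conjc (T x r')).
  rewrite GmxE rmorph_sum mulr_suml; apply: eq_bigr => r _.
  by rewrite mulr_sumr; apply: eq_bigr => r' _; rewrite (rmorphM _ (w r')); ring.
rewrite (eq_Exp expand) Exp_sum.
transitivity (\sum_(r < N * M) (Ps ^+ 2)%:C); last first.
  by rewrite sumr_const card_ord mulr_natl.
apply: eq_bigr => r _; rewrite Exp_sum (bigD1 r) //= big1 => [|r' neq_r'r].
  by rewrite ExpZ Exp_gram_term_mulJ // eqxx gram_weight_unimodular mul1r addr0.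
by rewrite ExpZ Exp_gram_term_mulJ // eq_sym (negbTE neq_r'r) mulr0.
Qed.

End OffDiagonal.

Theorem lemma1 (R : realType) (M N : nat) (Ps : R)
  (hM : (0 < M)%N) (hN : (0 < N)%N) (hPs : 0 < Ps)
  (p q : 'I_(N * M)) (hpq : p != q) :
  Exp (fun x : grid N M => Gmx Ps x p q) = 0 /\
  Var (fun x : grid N M => Gmx Ps x p q) = (M * N)%:R * (Ps ^+ 2)%:C.
Proof.
split; first exact: Exp_Gmx.
rewrite /Var Exp_Gmx // [(M * N)%N]mulnC -(Exp_Gmx_mulJ hpq (ltW hPs)).
by apply: eq_Exp => x; rewrite subr0.
Qed.
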